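(* For every non-negative integer $m$ and positive integer $n$, $$\sum_{k=1}^n\frac{H_{n-k}(m)}{k(k+1)}=H_n(m)+H_n(m+1)-H_{n+1}(m+1).$$ In particular, $\sum_{k=1}^n\frac{H_{n-k}}{k(k+1)}=H_n+H_n^2-H_n^{(2)}-H_{n+1}^2+H_{n+1}^{(2)}$.
   Context: For integers $m\ge 1$, $n\ge 0$, the multiple harmonic-like numbers are $H_n(m)=\sum_{1\le k_1+k_2+\cdots+k_m\le n}\frac{1}{k_1k_2\cdots k_m}$ (sum over positive integers $k_1,\dots,k_m$), with $H_n(0)=1$ for $n\ge 0$ and $H_0(m)=0$ for $m\ge1$. $H_n=H_n(1)=\sum_{k=1}^n\frac1k$, $H_n^{(2)}=\sum_{k=1}^n\frac1{k^2}$. *)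

From mathcomp Require Import all_boot all_order all_algebra.
Set Implicit Arguments. Unset Strict Implicit. Unset Printing Implicit Defensive.
Import Order.TTheory GRing.Theory Num.Theory.
Local Open Scope ring_scope.

(* Each k_i <= n, so tuples are finite functions
   'I_m -> 'I_n.+1.  Convention: H_n(0) = 1 (for m >= 1, n = 0 the sum is
   empty, hence H_0(m) = 0 automatically). *)
Definition Hm (n m : nat) : rat :=
  if m == 0%N then 1 else
  \sum_(k : {ffun 'I_m -> 'I_n.+1} |
          [forall i, (0 < k i)%N] && (\sum_i (k i : nat) <= n)%N)
     \prod_i ((k i : nat)%:R)^-1.

Definition harm (n : nat) : rat := \sum_(1 <= k < n.+1) (k%:R)^-1.
Definition harm2 (n : nat) : rat := \sum_(1 <= k < n.+1) ((k%:R) ^+ 2)^-1.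

(** Writing [H_n(m+1)] by its first coordinate gives the recursion
    [H_n(m+1) = sum_{k=1}^n H_{n-k}(m) / k].  Applied at [n+1] and compared with
    the telescoping [1/(k(k+1)) = 1/k - 1/(k+1)], it yields the identity.  The
    special case follows from [H_n(1) = H_n] and [H_n(2) = H_n^2 - H_n^(2)], the
    latter by induction on [n] using [sum_{k=1}^n 1/(k(n+1-k)) = 2 H_n/(n+1)]. *)

From mathcomp Require Import all_boot all_order all_algebra.
From mathcomp Require Import zify ring.
Import Order.TTheory GRing.Theory Num.Theory.
Local Open Scope ring_scope.

Definition Hbox (N n m : nat) : rat :=
  \sum_(f : {ffun 'I_m -> 'I_N} |
          [forall i, (0 < f i)%N] && (\sum_i (f i : nat) <= n)%N)
     \prod_i ((f i : nat)%:R)^-1.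

Definition ffun_cons N m (p : 'I_N * {ffun 'I_m -> 'I_N}) :
    {ffun 'I_m.+1 -> 'I_N} :=
  [ffun i => if unlift ord0 i is Some j then p.2 j else p.1].
Arguments ffun_cons {N m}.

Lemma ffun_cons0 N m (p : _ * {ffun _ -> _}) : @ffun_cons N m p ord0 = p.1.
Proof. by rewrite ffunE unlift_none. Qed.

Lemma ffun_consS N m (p : _ * {ffun _ -> _}) j :
  @ffun_cons N m p (lift ord0 j) = p.2 j.
Proof. by rewrite ffunE liftK. Qed.

Lemma bij_ffun_cons N m : bijective (@ffun_cons N m).
Proof.
exists (fun f : {ffun 'I_m.+1 -> 'I_N} => (f ord0, [ffun j => f (lift ord0 j)]))
  => [[a g]|f].
  by rewrite ffun_cons0; congr pair; apply/ffunP => j; rewrite ffunE ffun_consS.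
apply/ffunP => i; rewrite ffunE.
by case: unliftP => [j ->|->] //=; rewrite ffunE.
Qed.

Lemma Hbox0 N n : Hbox N n 0 = 1.
Proof.
rewrite /Hbox (big_pred1 (ffun0 (card_ord 0) : {ffun 'I_0 -> 'I_N})).
  by rewrite big_ord0.
move=> f /=; apply/andP/eqP => [_|_]; first by apply/ffunP => -[].
by split; [apply/forallP => -[] | rewrite big_ord0].
Qed.

Lemma Hbox_cons_cond N m (a : 'I_N) (g : {ffun 'I_m -> 'I_N}) n :
  [forall i, (0 < ffun_cons (a, g) i)%N]
    && (\sum_i (ffun_cons (a, g) i : nat) <= n)%N
  = (0 < a <= n)%N
    && ([forall i, (0 < g i)%N] && (\sum_i (g i : nat) <= n - a)%N).
Proof.
rewrite big_ord_recl ffun_cons0.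
rewrite (eq_bigr (fun j => (g j : nat))) => [|j _]; last by rewrite ffun_consS.
have -> : [forall i, (0 < ffun_cons (a, g) i)%N]
          = (0 < a)%N && [forall j, (0 < g j)%N].
  apply/forallP/andP => [pos|[a_gt0 /forallP g_pos] i].
    split; first by have := pos ord0; rewrite ffun_cons0.
    by apply/forallP => j; have := pos (lift ord0 j); rewrite ffun_consS.
  by case: (unliftP ord0 i) => [j ->|->]; rewrite ?ffun_consS ?ffun_cons0.
by case: (0 < a)%N; case: [forall j, (0 < g j)%N] => //=; apply/idP/idP; lia.
Qed.

Lemma Hbox_recS N n m :
  Hbox N n m.+1 = \sum_(a < N | (0 < a <= n)%N) (a%:R)^-1 * Hbox N (n - a) m.
Proof.
rewrite /Hbox (reindex _ (onW_bij _ (bij_ffun_cons N m))).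
under eq_bigl do rewrite Hbox_cons_cond.
rewrite (eq_bigr (fun p : 'I_N * {ffun 'I_m -> 'I_N} =>
  ((p.1 : nat)%:R)^-1 * \prod_i ((p.2 i : nat)%:R)^-1)) => [|[a g] _]; last first.
  by rewrite big_ord_recl ffun_cons0; congr (_ * _); apply: eq_bigr => j _;
     rewrite ffun_consS.
rewrite -(pair_big_dep (fun a : 'I_N => (0 < a <= n)%N)
  (fun a (g : {ffun 'I_m -> 'I_N}) =>
     [forall i, (0 < g i)%N] && (\sum_i (g i : nat) <= n - a)%N)
  (fun (a : 'I_N) (g : {ffun 'I_m -> 'I_N}) =>
     ((a : nat)%:R)^-1 * \prod_i ((g i : nat)%:R)^-1)) /=.
by apply: eq_bigr => a _; rewrite mulr_sumr.
Qed.

Lemma Hbox_recS_nat N n m : (n < N)%N ->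
  Hbox N n m.+1 = \sum_(1 <= k < n.+1) (k%:R)^-1 * Hbox N (n - k) m.
Proof.
move=> ltnN; rewrite Hbox_recS.
rewrite -(big_mkord (fun k => 0 < k <= n)%N (fun k => (k%:R)^-1 * Hbox N (n - k) m)).
rewrite (big_cat_nat _ (n := n.+1)) //= [X in _ + X]big1_seq ?addr0; last first.
  by move=> k /andP[/andP[_ le_kn] /[!mem_iota]/andP[le_nk _]]; lia.
rewrite big_ltn_cond //= big_nat_cond [RHS]big_nat_cond.
by apply: eq_bigl => k; rewrite andbT; lia.
Qed.

Lemma Hm_Hbox N n m : (n < N)%N -> Hm n m = Hbox N n m.
Proof.
elim: m N n => [|m IHm] N n ltnN; first by rewrite Hbox0.
rewrite [LHS]/Hm /= -/(Hbox n.+1 n m.+1) !Hbox_recS_nat //.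
apply: eq_big_nat => k _; rewrite -!IHm //; lia.
Qed.

Lemma HmS n m : Hm n m.+1 = \sum_(1 <= k < n.+1) (k%:R)^-1 * Hm (n - k) m.
Proof.
rewrite (Hm_Hbox _ _ m.+1 (ltnSn n)) Hbox_recS_nat //.
by apply: eq_big_nat => k _; rewrite -Hm_Hbox //; lia.
Qed.

Lemma sum_Hm_div_consecutive n m :
  \sum_(1 <= k < n.+1) Hm (n - k) m / ((k * k.+1)%N)%:R
    = Hm n m + Hm n m.+1 - Hm n.+1 m.+1.
Proof.
have -> : Hm n.+1 m.+1
          = Hm n m + \sum_(1 <= k < n.+1) (k.+1%:R)^-1 * Hm (n - k) m.
  by rewrite HmS big_nat_recl // subn1 /= invr1 mul1r.
rewrite HmS (eq_big_nat _ _ (F2 := fun k =>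
   (k%:R)^-1 * Hm (n - k) m - (k.+1%:R)^-1 * Hm (n - k) m)); last first.
  move=> k /andP[k_gt0 _]; rewrite natrM.
  have k_neq0 : (k%:R : rat) != 0 by rewrite pnatr_eq0 -lt0n.
  have k1_neq0 : (k.+1%:R : rat) != 0 by rewrite pnatr_eq0.
  by field; rewrite addrC natr1 k1_neq0 k_neq0.
by rewrite big_split /= sumrN; ring.
Qed.

Lemma harmS n : harm n.+1 = harm n + (n.+1%:R)^-1.
Proof. by rewrite /harm big_nat_recr. Qed.

Lemma harm2S n : harm2 n.+1 = harm2 n + ((n.+1%:R) ^+ 2)^-1.
Proof. by rewrite /harm2 big_nat_recr. Qed.

Lemma Hm1 n : Hm n 1 = harm n.
Proof. by rewrite HmS; apply: eq_bigr => k _; rewrite mulr1. Qed.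

Lemma sum_harm_rev n :
  \sum_(1 <= k < n.+1) ((n.+1 - k)%:R : rat)^-1 = harm n.
Proof.
by rewrite /harm big_nat_rev; apply: eq_big_nat => k ?; congr (_%:R^-1); lia.
Qed.

Lemma sum_inv_mul_inv_complement n :
  \sum_(1 <= k < n.+1) (k%:R)^-1 * ((n.+1 - k)%:R)^-1
    = 2 * harm n / n.+1%:R :> rat.
Proof.
(* 1/(k(n+1-k)) = (1/k + 1/(n+1-k)) / (n+1), and both halves sum to [harm n] *)
rewrite mulr_natl mulr2n -{2}sum_harm_rev /harm -big_split mulr_suml /=.
apply: eq_big_nat => k /andP[k_gt0 le_kn].
have -> : (n.+1%:R : rat) = k%:R + (n.+1 - k)%:R.
  by rewrite -natrD; congr (_%:R); lia.
have k_neq0 : (k%:R : rat) != 0 by rewrite pnatr_eq0 -lt0n.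
have nk_neq0 : ((n.+1 - k)%:R : rat) != 0 by rewrite pnatr_eq0; lia.
have sum_neq0 : (k%:R + (n.+1 - k)%:R : rat) != 0 by rewrite -natrD pnatr_eq0; lia.
by field; rewrite sum_neq0 k_neq0 nk_neq0.
Qed.

Lemma Hm2 n : Hm n 2 = harm n ^+ 2 - harm2 n.
Proof.
elim: n => [|n IHn].
  by rewrite HmS /harm /harm2 !big_geq // expr0n subr0.
have HmS2 : Hm n.+1 2
            = Hm n 2 + \sum_(1 <= k < n.+1) (k%:R)^-1 * ((n.+1 - k)%:R)^-1.
  have Hm01 : Hm 0 1 = 0 by rewrite HmS big_geq.
  rewrite !HmS big_nat_recr //= subnn Hm01 mulr0 addr0 -big_split /=.
  apply: eq_big_nat => k /andP[_ le_kn].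
  rewrite !Hm1 -mulrDr; congr (_ * _).
  have -> : (n.+1 - k = (n - k).+1)%N by lia.
  by rewrite harmS.
rewrite HmS2 sum_inv_mul_inv_complement IHn harmS harm2S -exprVn.
by field; rewrite addrC natr1 pnatr_eq0.
Qed.

Theorem theorem8 :
  (forall (m n : nat), (0 < n)%N ->
     \sum_(1 <= k < n.+1) Hm (n - k) m / ((k * k.+1)%N)%:R
     = Hm n m + Hm n m.+1 - Hm n.+1 m.+1)
  /\
  (forall n : nat, (0 < n)%N ->
     \sum_(1 <= k < n.+1) harm (n - k) / ((k * k.+1)%N)%:R
     = harm n + harm n ^+ 2 - harm2 n - harm n.+1 ^+ 2 + harm2 n.+1).
Proof.
split=> [m n _|n _]; first exact: sum_Hm_div_consecutive.
under eq_bigr do rewrite -Hm1.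
by rewrite sum_Hm_div_consecutive Hm1 !Hm2; ring.
Qed.
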